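(* Let $L^x,L^y>0$, let $i\neq j$ be two boxes, each box $k\in\{i,j\}$ having center $(c^x_k,c^y_k)$, side lengths $(\ell^x_k,\ell^y_k)$ and given constants $lb^s_k>0$ ($s\in\{x,y\}$). Let $$Q^{lb}=\{(c_i,c_j,\ell_i,\ell_j)\in\mathbb{R}^8:\ \tfrac12\ell^s_k\le c^s_k\le L^s-\tfrac12\ell^s_k,\ \ell^s_k\ge lb^s_k\ \ \forall s\in\{x,y\},k\in\{i,j\}\}.$$ Consider binary variables $u^s_{p,q}$ for $s\in\{x,y\}$ and $(p,q)\in\{(i,j),(j,i)\}$, and let $E$ be the set of $(c_i,c_j,\ell_i,\ell_j,u)\in\mathbb{R}^8\times\{0,1\}^4$ such that $(c_i,c_j,\ell_i,\ell_j)\in Q^{lb}$, exactly one of the four variables $u^s_{p,q}$ equals $1$, and $u^s_{p,q}=1$ implies $\mathscr{B}_p\leftarrow_s\mathscr{B}_q$ (i.e. $E$ is the embedding $\operatorname{Em}(Q^{lb},D^4,U^4)$ where the unit vector with $u^s_{p,q}=1$ encodes the branch $\mathscr{B}_p\leftarrow_s\mathscr{B}_q$). Then $E$ equals the set of $(c_i,c_j,\ell_i,\ell_j,u)$ satisfying \begin{align*} &\tfrac12\ell^s_p+lb^s_q u^s_{q,p}\le c^s_p\le L^s-\tfrac12\ell^s_p-lb^s_q u^s_{p,q} &&\forall s\in\{x,y\},(p,q)\in\{(i,j),(j,i)\},\\ &c^s_p+\tfrac12\ell^s_p\le c^s_q-\tfrac12\ell^s_q+L^s(1-u^s_{p,q})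 &&\forall s\in\{x,y\},(p,q)\in\{(i,j),(j,i)\},\\ &\ell^s_p\ge lb^s_p &&\forall s\in\{x,y\},p\in\{i,j\},\\ &u^x_{i,j}+u^x_{j,i}+u^y_{i,j}+u^y_{j,i}=1, &&\\ &u^s_{p,q}\in\{0,1\} &&\forall s\in\{x,y\},(p,q)\in\{(i,j),(j,i)\}. \end{align*} Moreover, if $lb^s_i+lb^s_j<L^s$ for both $s\in\{x,y\}$, then this formulation is ideal: every extreme point of the polyhedron obtained by replacing $u^s_{p,q}\in\{0,1\}$ with $0\le u^s_{p,q}\le 1$ has all $u$-coordinates integral.
   Context: Box $\mathscr{B}_p$ precedes box $\mathscr{B}_q$ in direction $s\in\{x,y\}$, written $\mathscr{B}_p\leftarrow_s\mathscr{B}_q$, if $c^s_p+\tfrac12\ell^s_p\le c^s_q-\tfrac12\ell^s_q$. In the paper, $lb^s_k=\beta_k/ub^s_k$ with $ub^s_k=\min\{\sqrt{\alpha_k\beta_k},L^s\}$ for given area $\alpha_k>0$ and aspect ratio $\beta_k>0$. *)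

From HB Require Import structures.
From mathcomp Require Import all_boot all_order all_algebra.
Set Implicit Arguments. Unset Strict Implicit. Unset Printing Implicit Defensive.
Import Order.TTheory GRing.Theory Num.Theory.
Local Open Scope ring_scope.

Inductive Dir := DX | DY.
Inductive Box := BI | BJ.

Definition other (p : Box) : Box := match p with BI => BJ | BJ => BI end.

Section Defs.
Variable R : realFieldType.

(* Data: L : Dir -> R (L^s), lb : Dir -> Box -> R (lb^s_k);
   variables: c, l : Dir -> Box -> R (c^s_k, l^s_k),
   u : Dir -> Box -> R with  u s p  standing for  u^s_{p, other p}. *)

Definition precedes (c l : Dir -> Box -> R) (s : Dir) (p q : Box) : Prop :=
  c s p + l s p / 2%:R <= c s q - l s q / 2%:R.

Definition inQlb (L : Dir -> R) (lb : Dir -> Box -> R) (c l : Dir -> Box -> R) : Prop :=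
  forall s k, l s k / 2%:R <= c s k /\ c s k <= L s - l s k / 2%:R /\ lb s k <= l s k.

Definition inEmb (L : Dir -> R) (lb : Dir -> Box -> R) (c l u : Dir -> Box -> R) : Prop :=
  inQlb L lb c l /\
  (forall s p, u s p = 0 \/ u s p = 1) /\
  (exists s0 p0, u s0 p0 = 1 /\ forall s p, (s, p) <> (s0, p0) -> u s p = 0) /\
  (forall s p, u s p = 1 -> precedes c l s p (other p)).

Definition inRelax (L : Dir -> R) (lb : Dir -> Box -> R) (c l u : Dir -> Box -> R) : Prop :=
  (forall s p, l s p / 2%:R + lb s (other p) * u s (other p) <= c s p /\
               c s p <= L s - l s p / 2%:R - lb s (other p) * u s p) /\
  (forall s p, c s p + l s p / 2%:R <= c s (other p) - l s (other p) / 2%:R + L s * (1 - u s p)) /\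
  (forall s p, lb s p <= l s p) /\
  (u DX BI + u DX BJ + u DY BI + u DY BJ = 1) /\
  (forall s p, 0 <= u s p /\ u s p <= 1).

Definition inF (L : Dir -> R) (lb : Dir -> Box -> R) (c l u : Dir -> Box -> R) : Prop :=
  inRelax L lb c l u /\ (forall s p, u s p = 0 \/ u s p = 1).

Definition extreme_relax (L : Dir -> R) (lb : Dir -> Box -> R) (c l u : Dir -> Box -> R) : Prop :=
  inRelax L lb c l u /\
  forall (c1 l1 u1 c2 l2 u2 : Dir -> Box -> R) (t : R),
    inRelax L lb c1 l1 u1 -> inRelax L lb c2 l2 u2 -> 0 < t -> t < 1 ->
    (forall s k, c s k = t * c1 s k + (1 - t) * c2 s k) ->
    (forall s k, l s k = t * l1 s k + (1 - t) * l2 s k) ->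
    (forall s k, u s k = t * u1 s k + (1 - t) * u2 s k) ->
    (forall s k, c1 s k = c s k /\ l1 s k = l s k /\ u1 s k = u s k).

End Defs.

(* The first part unfolds the definitions: for binary [u] the big-M constraints
   are either vacuous or say that the chosen box precedes the other one.

   For ideality, let [t = u^s_{p,q}] be fractional.  The constraints split by
   direction, and in each direction, written in the box endpoints and
   homogenised, they form a cone that is closed under addition and scaling.
   In direction [s] an explicit piecewise-linear witness splits off a part of
   weight [t] in which [p] precedes [q]; in the other direction, splitting off
   both ordered parts leaves an unordered remainder of weight at least [t], of
   which a multiple is taken.  Rescaling gives two points of the relaxation
   whose [t : 1 - t] combination is the given point, the first of which has
   [u^s_{p,q} = 1]; so the given point is not extreme. *)

From HB Require Import structures.
From mathcomp Require Import all_boot all_order all_algebra.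
From mathcomp Require Import ring lra.
Set Implicit Arguments. Unset Strict Implicit. Unset Printing Implicit Defensive.
Import Order.TTheory GRing.Theory Num.Theory.
Local Open Scope ring_scope.

Definition eq_dir (d e : Dir) : bool :=
  match d, e with DX, DX | DY, DY => true | _, _ => false end.
Lemma eq_dirP : Equality.axiom eq_dir. Proof. by case; case; constructor. Qed.
HB.instance Definition _ := hasDecEq.Build Dir eq_dirP.

Definition eq_box (p q : Box) : bool :=
  match p, q with BI, BI | BJ, BJ => true | _, _ => false end.
Lemma eq_boxP : Equality.axiom eq_box. Proof. by case; case; constructor. Qed.
HB.instance Definition _ := hasDecEq.Build Box eq_boxP.

Definition odir (s : Dir) : Dir := match s with DX => DY | DY => DX end.

Lemma other_other p : other (other p) = p. Proof. by case: p. Qed.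
Lemma other_neq p : (other p == p) = false. Proof. by case: p. Qed.
Lemma odir_neq s : (odir s == s) = false. Proof. by case: s. Qed.
Lemma box_cases p q : q = p \/ q = other p. Proof. by case: p; case: q; auto. Qed.
Lemma dir_cases s d : d = s \/ d = odir s. Proof. by case: s; case: d; auto. Qed.

Lemma dir_choice2 (T U : Type) (P : Dir -> T -> U -> Prop) :
  (forall d, exists x y, P d x y) ->
  exists (f : Dir -> T) (g : Dir -> U), forall d, P d (f d) (g d).
Proof.
move=> H; have [xX [yX hX]] := H DX; have [xY [yY hY]] := H DY.
by exists (fun d => if d is DX then xX else xY), (fun d => if d is DX then yX else yY); case.
Qed.

Ltac cases_lra :=
  lra || match goal with H : _ \/ _ |- _ => case: H => H; cases_lra end.

Section Cone.
Variables (R : realFieldType) (L : R) (lb : Box -> R).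

(* Constraints of one direction of the relaxation in terms of the box endpoints
   [x p, y p], homogenised by the scale [k]; [a p] stands for [u^s_{p, other p}]. *)
Definition relax_cone (k : R) (a x y : Box -> R) : Prop :=
  forall p,
  [/\ lb (other p) * a (other p) <= x p,
      y p <= k * L - lb (other p) * a p,
      y p - x (other p) <= k * L - L * a p &
      k * lb p <= y p - x p].

Lemma relax_cone_ext (k k' : R) (a a' x x' y y' : Box -> R) :
  k = k' -> a =1 a' -> x =1 x' -> y =1 y' ->
  relax_cone k a x y -> relax_cone k' a' x' y'.
Proof.
move=> -> ea ex ey hv p; have := hv p.
by rewrite !ea !ex !ey.
Qed.

Lemma relax_cone_add (k1 k2 : R) (a1 a2 x1 x2 y1 y2 : Box -> R) :
  relax_cone k1 a1 x1 y1 -> relax_cone k2 a2 x2 y2 ->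
  relax_cone (k1 + k2) (fun q => a1 q + a2 q)
    (fun q => x1 q + x2 q) (fun q => y1 q + y2 q).
Proof.
move=> h1 h2 p; have [? ? ? ?] := h1 p; have [? ? ? ?] := h2 p.
split; lra.
Qed.

Lemma relax_cone_scale (c k : R) (a x y : Box -> R) : 0 <= c ->
  relax_cone k a x y ->
  relax_cone (c * k) (fun q => c * a q) (fun q => c * x q) (fun q => c * y q).
Proof.
move=> hc hv p; have [h1 h2 h3 h4] := hv p.
have := ler_wpM2l hc h1; have := ler_wpM2l hc h2.
have := ler_wpM2l hc h3; have := ler_wpM2l hc h4.
by split; lra.
Qed.

Lemma maxr_cases (u v : R) :
  [/\ u <= Num.max u v, v <= Num.max u v & Num.max u v = u \/ Num.max u v = v].
Proof. by rewrite !le_max !lexx orbT; split=> //; case: leP => _; [right|left]. Qed.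

Lemma minr_cases (u v : R) :
  [/\ Num.min u v <= u, Num.min u v <= v & Num.min u v = u \/ Num.min u v = v].
Proof. by rewrite !ge_min !lexx orbT; split=> //; case: leP => _; [left|right]. Qed.

Hypotheses (lb_ge0 : forall p, 0 <= lb p) (lb_fit : lb BI + lb BJ <= L).

Lemma lb_fit_other p : lb p + lb (other p) <= L.
Proof. by case: p => //=; rewrite addrC. Qed.

(* The witness pushes box [p] as far left and box [q = other p] as far right as
   the remainder allows, and gives each box all of its length except the
   [(k - a p) * lb] that the remainder needs (clipped at the walls). *)
Lemma relax_cone_split_order (k : R) (a x y : Box -> R) (p : Box) :
  relax_cone k a x y ->
  0 <= a p -> 0 <= a (other p) -> a p + a (other p) <= k ->
  exists x1 y1 : Box -> R,
    relax_cone (a p) (fun q => a p * (q == p)%:R) x1 y1 /\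
    relax_cone (k - a p) (fun q => a q * (q != p)%:R)
      (fun q => x q - x1 q) (fun q => y q - y1 q).
Proof.
move=> hv ha hb hab.
have [hp1 hp2 hp3 hp4] := hv p.
have [hq1 hq2 hq3 hq4] := hv (other p).
rewrite other_other in hq1 hq2 hq3.
have hfit := lb_fit_other p.
have hlp := lb_ge0 p; have hlq := lb_ge0 (other p).
have n1 : 0 <= a p * (L - lb p - lb (other p)) by apply: mulr_ge0; lra.
have n2 : 0 <= (k - a p - a (other p)) * lb p by apply: mulr_ge0; lra.
have n3 : 0 <= (k - a p - a (other p)) * lb (other p) by apply: mulr_ge0; lra.
have n4 : 0 <= (k - a p - a (other p)) * (L - lb p - lb (other p)).
  by apply: mulr_ge0; lra.
have n5 : 0 <= a (other p) * (L - lb p - lb (other p)) by apply: mulr_ge0; lra.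
have [e1 e2 e3] := minr_cases (x (other p)) (a p * (L - lb (other p))).
set xq1 := Num.min _ _ in e1 e2 e3.
have [f1 f2 f3] := minr_cases (a p * L)
  (xq1 + (y (other p) - x (other p)) - (k - a p) * lb (other p)).
set yq1 := Num.min _ _ in f1 f2 f3.
have [g1 g2 g3] := maxr_cases (y p - (k - a p) * L) (a p * lb p).
set yp1 := Num.max _ _ in g1 g2 g3.
have [h1 h2 h3] := maxr_cases 0 (yp1 - (y p - x p) + (k - a p) * lb p).
set xp1 := Num.max _ _ in h1 h2 h3.
clearbody xq1 yq1 yp1 xp1.
exists (fun r => if r == p then xp1 else xq1), (fun r => if r == p then yp1 else yq1).
split=> r; case: (box_cases p r) => ->;
  rewrite ?other_other ?eqxx ?other_neq /= ?mulr1 ?mulr0 ?subr0;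
  split; cases_lra.
Qed.

Lemma relax_cone_split_free (k t : R) (a x y : Box -> R) :
  0 <= t -> 0 <= a BI -> 0 <= a BJ -> a BI + a BJ + t <= k ->
  relax_cone k a x y ->
  exists x1 y1 : Box -> R,
    relax_cone t (fun=> 0) x1 y1 /\
    relax_cone (k - t) a (fun q => x q - x1 q) (fun q => y q - y1 q).
Proof.
move=> ht hI hJ hk hv.
have hIJ : a BI + a (other BI) <= k by rewrite /=; lra.
have [xI [yI [hvI hv']]] := relax_cone_split_order hv hI hJ hIJ.
have [xJ [yJ [hvJ hv0]]] : exists xJ yJ : Box -> R,
    relax_cone (a BJ) (fun q => a BJ * (q == BJ)%:R) xJ yJ /\
    relax_cone (k - a BI - a BJ) (fun=> 0)
      (fun q => x q - xI q - xJ q) (fun q => y q - yI q - yJ q).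
  have hJ' : 0 <= a BJ * (BJ != BI)%:R by rewrite mulr1.
  have hI' : 0 <= a BI * (BI != BI)%:R by rewrite mulr0.
  have hk' : a BJ * (BJ != BI)%:R + a BI * (BI != BI)%:R <= k - a BI.
    by rewrite mulr1 mulr0; lra.
  have [xJ [yJ [hvJ hv0]]] := relax_cone_split_order (p := BJ) hv' hJ' hI' hk'.
  exists xJ, yJ; split.
    by apply: relax_cone_ext hvJ => [|q|q|q] //=; rewrite mulr1.
  by apply: relax_cone_ext hv0 => [|[]|q|q] /=; rewrite ?mulr0 //; lra.
set r := k - a BI - a BJ in hv0.
have hr : t <= r by rewrite /r; lra.
have hlam : t / r * r = t.
  have [r0|r0] := eqVneq r 0; last by rewrite divfK.
  by rewrite r0 mulr0; rewrite r0 in hr; lra.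
have hlam1 : 0 <= 1 - t / r.
  have [->|r0] := eqVneq r 0; first by rewrite invr0 mulr0 subr0.
  have r_gt0 : 0 < r by rewrite lt_def r0 (le_trans ht hr).
  by rewrite subr_ge0 ler_pdivrMr // mul1r.
exists (fun q => t / r * (x q - xI q - xJ q)), (fun q => t / r * (y q - yI q - yJ q)).
split.
- apply: relax_cone_ext (relax_cone_scale (divr_ge0 ht (le_trans ht hr)) hv0) => // q.
  by rewrite mulr0.
- have := relax_cone_add hvI (relax_cone_add hvJ (relax_cone_scale hlam1 hv0)).
  apply: relax_cone_ext => [|[]|q|q] /=; rewrite ?mulrBl ?mul1r ?hlam /r; ring.
Qed.

End Cone.

Section Relaxation.
Variables (R : realFieldType) (L : Dir -> R) (lb : Dir -> Box -> R).
Implicit Types (c l u : Dir -> Box -> R).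

Definition lo c l d k := c d k - l d k / 2%:R.
Definition hi c l d k := c d k + l d k / 2%:R.
Definition mid (x y : Dir -> Box -> R) d k := (x d k + y d k) / 2%:R.
Definition len (x y : Dir -> Box -> R) d k := y d k - x d k.

Lemma lo_mid x y d k : lo (mid x y) (len x y) d k = x d k.
Proof. rewrite /lo /mid /len; lra. Qed.

Lemma hi_mid x y d k : hi (mid x y) (len x y) d k = y d k.
Proof. rewrite /hi /mid /len; lra. Qed.

Lemma sum_dir_box (f : Dir -> Box -> R) s p :
  f DX BI + f DX BJ + f DY BI + f DY BJ =
  f s p + f s (other p) + f (odir s) BI + f (odir s) BJ.
Proof. by case: s; case: p => /=; ring. Qed.

Lemma inRelaxE c l u :
  inRelax L lb c l u <->
  [/\ forall d, relax_cone (L d) (lb d) 1 (u d) (lo c l d) (hi c l d),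
      u DX BI + u DX BJ + u DY BI + u DY BJ = 1 &
      forall s p, 0 <= u s p /\ u s p <= 1].
Proof.
rewrite /lo /hi; split.
  case=> h1 [h2 [h3 [hs hb]]]; split=> // d p.
  by have [? ?] := h1 d p; have ? := h2 d p; have ? := h3 d p; split; lra.
case=> hv hs hb; split; [|split; [|split]] => // d p.
- by have [? ? _ _] := hv d p; split; lra.
- by have [_ _ ? _] := hv d p; lra.
- by have [_ _ _ ?] := hv d p; lra.
Qed.

Lemma inRelax_rescale (t : R) (v x y : Dir -> Box -> R) : 0 < t ->
  (forall d, relax_cone (L d) (lb d) t (fun k => t * v d k) (x d) (y d)) ->
  v DX BI + v DX BJ + v DY BI + v DY BJ = 1 ->
  (forall s p, 0 <= v s p /\ v s p <= 1) ->
  inRelax L lb (mid (fun d k => t^-1 * x d k) (fun d k => t^-1 * y d k))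
    (len (fun d k => t^-1 * x d k) (fun d k => t^-1 * y d k)) v.
Proof.
move=> t_gt0 hv hsum hb; apply/inRelaxE; split=> // d.
have := relax_cone_scale (ltW (_ : 0 < t^-1)) (hv d).
rewrite invr_gt0 => /(_ t_gt0).
by apply: relax_cone_ext => [|q|q|q]; rewrite ?lo_mid ?hi_mid ?mulVf ?mulKf ?gt_eqF.
Qed.

Definition unit_at (s : Dir) (p : Box) (d : Dir) (k : Box) : R :=
  ((d == s) && (k == p))%:R.

Lemma unit_atE s p : unit_at s p s p = 1.
Proof. by rewrite /unit_at !eqxx. Qed.

Lemma unit_at_sum s p : unit_at s p DX BI + unit_at s p DX BJ +
  unit_at s p DY BI + unit_at s p DY BJ = 1.
Proof. by case: s; case: p; rewrite /unit_at /= ?addr0 ?add0r. Qed.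

Hypotheses (lb_ge0 : forall s p, 0 <= lb s p)
  (lb_fit : forall s, lb s BI + lb s BJ <= L s).

Lemma relax_split_dir c l u s p d :
  inRelax L lb c l u ->
  exists x1 y1 : Box -> R,
    relax_cone (L d) (lb d) (u s p) (fun k => u s p * unit_at s p d k) x1 y1 /\
    relax_cone (L d) (lb d) (1 - u s p) (fun k => u d k - u s p * unit_at s p d k)
      (fun k => lo c l d k - x1 k) (fun k => hi c l d k - y1 k).
Proof.
move=> /inRelaxE[hv hsum hb].
have := sum_dir_box u s p; rewrite hsum => hsum'.
have [b0 _] := hb s p; have [b1 _] := hb s (other p).
have [b2 _] := hb (odir s) BI; have [b3 _] := hb (odir s) BJ.
case: (dir_cases s d) => ->.
  have hab : u s p + u s (other p) <= 1 by lra.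
  have [x1 [y1 [h1 h2]]] :=
    relax_cone_split_order (lb_ge0 s) (lb_fit s) (hv s) b0 b1 hab.
  exists x1, y1; split.
    by apply: relax_cone_ext h1 => // q; rewrite /unit_at eqxx.
  apply: relax_cone_ext h2 => // q; rewrite /unit_at eqxx /=.
  by case: eqP => [->|_]; rewrite ?mulr0 ?mulr1 ?subr0 ?subrr.
have hk : u (odir s) BI + u (odir s) BJ + u s p <= 1 by lra.
have [x1 [y1 [h1 h2]]] :=
  relax_cone_split_free (lb_ge0 _) (lb_fit _) b0 b2 b3 hk (hv (odir s)).
exists x1, y1; split.
  by apply: relax_cone_ext h1 => // q; rewrite /unit_at odir_neq mulr0.
by apply: relax_cone_ext h2 => // q; rewrite /unit_at odir_neq mulr0 subr0.
Qed.

Lemma relax_split_at c l u s p :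
  inRelax L lb c l u -> 0 < u s p -> u s p < 1 ->
  exists c1 l1 u1 c2 l2 u2,
    [/\ inRelax L lb c1 l1 u1, inRelax L lb c2 l2 u2,
        forall d k, c d k = u s p * c1 d k + (1 - u s p) * c2 d k,
        forall d k, l d k = u s p * l1 d k + (1 - u s p) * l2 d k &
        (forall d k, u d k = u s p * u1 d k + (1 - u s p) * u2 d k) /\ u1 s p = 1].
Proof.
move=> hR t_gt0 t_lt1.
have [x1 [y1 hw]] := dir_choice2 (fun d => relax_split_dir s p d hR).
have /inRelaxE[_ hsum hb] := hR.
have := sum_dir_box u s p; rewrite hsum => hsum'.
have t0 : u s p != 0 by rewrite gt_eqF.
have t1 : 1 - u s p != 0 by rewrite gt_eqF // subr_gt0.
pose u2 d k := (1 - u s p)^-1 * (u d k - u s p * unit_at s p d k).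
have u2_bound d k : 0 <= u2 d k /\ u2 d k <= 1.
  have [b1 _] := hb s (other p); have [b2 _] := hb (odir s) BI.
  have [b3 _] := hb (odir s) BJ.
  rewrite /u2; suff /andP[h0 h1] : 0 <= u d k - u s p * unit_at s p d k <= 1 - u s p.
    split; first by rewrite mulr_ge0 // invr_ge0; lra.
    by rewrite mulrC ler_pdivrMr ?mul1r //; lra.
  rewrite /unit_at; case: (dir_cases s d) => ->;
    [case: (box_cases p k) => -> | case: k];
    rewrite ?eqxx ?other_neq ?odir_neq /=; apply/andP; lra.
have u2_sum : u2 DX BI + u2 DX BJ + u2 DY BI + u2 DY BJ = 1.
  rewrite (sum_dir_box u2 s p) /u2 -!mulrDr.
  rewrite [X in _ * X](_ : _ = 1 - u s p) ?mulVf //.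
  by rewrite /unit_at !eqxx other_neq odir_neq /=; lra.
exists (mid (fun d k => (u s p)^-1 * x1 d k) (fun d k => (u s p)^-1 * y1 d k)).
exists (len (fun d k => (u s p)^-1 * x1 d k) (fun d k => (u s p)^-1 * y1 d k)).
exists (unit_at s p).
exists (mid (fun d k => (1 - u s p)^-1 * (lo c l d k - x1 d k))
            (fun d k => (1 - u s p)^-1 * (hi c l d k - y1 d k))).
exists (len (fun d k => (1 - u s p)^-1 * (lo c l d k - x1 d k))
            (fun d k => (1 - u s p)^-1 * (hi c l d k - y1 d k))).
exists u2; split.
- apply: inRelax_rescale t_gt0 (fun d => (hw d).1) (unit_at_sum s p) _.
  by move=> d k; rewrite /unit_at; case: (_ && _) => /=; lra.
- apply: inRelax_rescale (_ : 0 < 1 - u s p) _ u2_sum u2_bound; first lra.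
  move=> d; apply: relax_cone_ext (hw d).2 => // q.
  by rewrite /u2 mulVKf.
- by move=> d k; rewrite /mid /lo /hi; field; rewrite t0 t1.
- by move=> d k; rewrite /len /lo /hi; field; rewrite t0 t1.
- by split=> [d k|]; rewrite ?unit_atE // /u2; field.
Qed.

End Relaxation.

Section Embedding.
Variables (R : realFieldType) (L : Dir -> R) (lb : Dir -> Box -> R).
Hypothesis lb_gt0 : forall s p, 0 < lb s p.

Lemma binary_sum1_unique (f : Dir -> Box -> R) s p s' p' :
  (forall s p, 0 <= f s p) -> f DX BI + f DX BJ + f DY BI + f DY BJ = 1 ->
  f s p = 1 -> f s' p' = 1 -> (s', p') = (s, p).
Proof.
move=> f_ge0 hsum e e'.
have := f_ge0 DX BI; have := f_ge0 DX BJ; have := f_ge0 DY BI; have := f_ge0 DY BJ.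
by move: e e'; case: s; case: p; case: s'; case: p' => //= *; exfalso; lra.
Qed.

Lemma inEmb_inF c l u : inEmb L lb c l u -> inF L lb c l u.
Proof.
move=> [hQ [hbin [[s0 [p0 [h1 h0]]] hpre]]].
have hcase s p : u s p = 0 \/ u s p = 1 /\ precedes c l s p (other p).
  by case: (hbin s p) => e; [left | right; split; last exact: hpre].
split=> //; split; [|split; [|split; [|split]]] => [s p|s p|s p||s p].
- have [? [? ?]] := hQ s p; have [? [? ?]] := hQ s (other p).
  have := hcase s p; have := hcase s (other p); rewrite /precedes other_other.
  by case=> [->|[-> ?]]; case=> [->|[-> ?]]; split; lra.
- have [? [? ?]] := hQ s p; have [? [? ?]] := hQ s (other p).
  by rewrite /precedes in hcase; case: (hcase s p) => [->|[-> ?]]; lra.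
- by have [_ []] := hQ s p.
- rewrite (sum_dir_box u s0 p0) h1 !h0 ?addr0 //.
  + by move=> [/eqP]; rewrite odir_neq.
  + by move=> [/eqP]; rewrite odir_neq.
  + by move=> [/eqP]; rewrite other_neq.
- by case: (hbin s p) => ->; lra.
Qed.

Lemma inF_inEmb c l u : inF L lb c l u -> inEmb L lb c l u.
Proof.
move=> [[h1 [h2 [h3 [hsum hb]]]] hbin].
have u_ge0 s p : 0 <= u s p by case: (hb s p).
split; [|split; [done | split]].
- move=> s p; have [? ?] := h1 s p; have := h3 s p.
  have := mulr_ge0 (ltW (lb_gt0 s (other p))) (u_ge0 s p).
  have := mulr_ge0 (ltW (lb_gt0 s (other p))) (u_ge0 s (other p)).
  by split; lra.
- have [s0 [p0 e0]] : exists s0 p0, u s0 p0 = 1.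
    case: (hbin DX BI) => [?|]; last by exists DX, BI.
    case: (hbin DX BJ) => [?|]; last by exists DX, BJ.
    case: (hbin DY BI) => [?|]; last by exists DY, BI.
    case: (hbin DY BJ) => [?|]; last by exists DY, BJ.
    lra.
  exists s0, p0; split=> // s p ne.
  case: (hbin s p) => // e; case: ne.
  exact: binary_sum1_unique u_ge0 hsum e0 e.
- by move=> s p e; have := h2 s p; rewrite e /precedes; lra.
Qed.

End Embedding.

Theorem theorem5p1 (R : realFieldType) (L : Dir -> R) (lb : Dir -> Box -> R)
  (hL : forall s, 0 < L s) (hlb : forall s k, 0 < lb s k) :
  (forall c l u : Dir -> Box -> R, inEmb L lb c l u <-> inF L lb c l u) /\
  ((forall s, lb s BI + lb s BJ < L s) ->
   forall c l u : Dir -> Box -> R, extreme_relax L lb c l u ->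
   forall s p, u s p = 0 \/ u s p = 1).
Proof.
split=> [c l u|hfit c l u [hR hext] s p]; first by split; [apply: inEmb_inF | apply: inF_inEmb].
have [u_ge0 u_le1] : 0 <= u s p /\ u s p <= 1 by case: hR => _ [_ [_ [_ ]]].
case: (eqVneq (u s p) 0) => [|u_ne0]; first by left.
case: (eqVneq (u s p) 1) => [|u_ne1]; first by right.
have lb_ge0 s' k : 0 <= lb s' k by apply: ltW.
have lb_fit s' : lb s' BI + lb s' BJ <= L s' by apply: ltW.
have t_gt0 : 0 < u s p by rewrite lt_def u_ne0.
have t_lt1 : u s p < 1 by rewrite lt_def eq_sym u_ne1.
have [c1 [l1 [u1 [c2 [l2 [u2 [h1 h2 ec el [eu e1]]]]]]]] :=
  relax_split_at lb_ge0 lb_fit hR t_gt0 t_lt1.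
have [_ [_ e]] := hext c1 l1 u1 c2 l2 u2 (u s p) h1 h2 t_gt0 t_lt1 ec el eu s p.
by move/eqP: u_ne1; rewrite -e e1.
Qed.
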